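(* Let $\varphi:\mathbb{R}\to\overline{\mathbb{R}}$ be proper, lsc and convex. Then there exist a proper, lsc, convex, nondecreasing function $\varphi^\uparrow$ and a proper, lsc, convex, nonincreasing function $\varphi^\downarrow$ such that $\varphi=\varphi^\uparrow+\varphi^\downarrow$. In addition, if $\operatorname{int}(\operatorname{dom}\varphi)\neq\emptyset$, then $\partial\varphi(z)=\partial\varphi^\uparrow(z)+\partial\varphi^\downarrow(z)$ for every $z\in\operatorname{dom}\varphi$.
   Context: $\partial$ denotes the convex subdifferential; $\overline{\mathbb{R}}=\mathbb{R}\cup\{\pm\infty\}$. *)

From HB Require Import structures.
From mathcomp Require Import all_boot all_order all_algebra.
From mathcomp Require Import all_classical all_reals all_analysis.
Set Implicit Arguments. Unset Strict Implicit. Unset Printing Implicit Defensive.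
Import Order.TTheory GRing.Theory Num.Theory.
Import numFieldNormedType.Exports.
Local Open Scope classical_set_scope.
Local Open Scope ring_scope.
Local Open Scope ereal_scope.

Section ConvexAnalysis.
Variable R : realType.
Implicit Types f : R -> \bar R.

Definition edom f : set R := [set x | f x < +oo].

Definition eproper f := (forall x, f x != -oo) /\ (exists x, f x < +oo).

(* convexity of an extended-real-valued function (Jensen inequality;
   for t in ]0,1[, which avoids any 0 * oo convention) *)
Definition econvex f := forall (x y t : R), (0 < t)%R -> (t < 1)%R ->
  f (t * x + (1 - t) * y)%R <= (t%:E * f x) + ((1 - t)%:E * f y).

Definition enondecreasing f := forall x y : R, (x <= y)%R -> f x <= f y.
Definition enonincreasing f := forall x y : R, (x <= y)%R -> f y <= f x.

Definition subdiff f (z : R) : set R :=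
  [set v | f z \is a fin_num /\ forall y : R, f z + (v * (y - z))%:E <= f y].

Definition setsum_R (A B : set R) : set R :=
  [set x | exists a b, A a /\ B b /\ x = (a + b)%R].

End ConvexAnalysis.

(* If phi is monotone, one of the two parts is 0.  Otherwise convexity forbids
   strict peaks, so phi increases somewhere and decreases somewhere; the
   supremum of the points after which phi still decreases is then, by lower
   semicontinuity, a minimiser x0.  Since phi is nonincreasing left of x0 and
   nondecreasing right of it, phi(max x x0) - phi(x0) and phi(min x x0) are
   convex, monotone, and add up to phi.  A subgradient v of phi at z satisfies
   v (z - x0) >= 0, so v is a subgradient of the part that is active at z,
   while 0 is a subgradient of the other part, which is minimal at z; the
   reverse inclusion is the sum rule. *)

From HB Require Import structures.
From mathcomp Require Import all_boot all_order all_algebra.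
From mathcomp Require Import all_classical all_reals all_analysis.
From mathcomp Require Import ring lra.
Set Implicit Arguments. Unset Strict Implicit.
Import Order.TTheory GRing.Theory Num.Theory.
Import numFieldNormedType.Exports.
Local Open Scope classical_set_scope.
Local Open Scope ring_scope.
Local Open Scope ereal_scope.

Section ConvexMonotone.
Variable R : realType.
Implicit Types (f : R -> \bar R) (x y z : R).

Lemma econvex_no_strict_peak f : (forall x, f x != -oo) -> econvex f ->
  forall y x z, (y < x)%R -> (x < z)%R -> f y < f x -> f z < f x -> False.
Proof.
move=> nf cf y x z yx xz fyx fzx.
have yz : (0 < z - y)%R by rewrite subr_gt0 (lt_trans yx xz).
pose t := ((z - x) / (z - y))%R.
have t0 : (0 < t)%R by rewrite divr_gt0 // subr_gt0.
have t1 : (t < 1)%R by rewrite ltr_pdivrMr // mul1r; lra.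
have xE : (t * y + (1 - t) * z)%R = x by rewrite /t; field; rewrite lt0r_neq0.
move: (cf y z t t0 t1) fyx fzx (nf y) (nf z); rewrite xE.
case: (f y) => [fy||] //; case: (f z) => [fz||] //; case: (f _) => [fx||] //=.
rewrite -!EFinM -EFinD !lte_fin lee_fin; nra.
Qed.

Variables (f : R -> \bar R) (x0 : R).
Hypotheses (nf : forall x, f x != -oo) (cf : econvex f) (x0_min : forall y, f x0 <= f y).

Lemma econvex_nondecreasing_ge_argmin x y : (x0 <= x)%R -> (x <= y)%R -> f x <= f y.
Proof.
move=> + xy; rewrite le_eqVlt => /predU1P[<-|x0x]; first exact: x0_min.
move: xy; rewrite le_eqVlt => /predU1P[<-|xy]; first exact: lexx.
rewrite leNgt; apply/negP => fyx.
exact: (econvex_no_strict_peak nf cf x0x xy (le_lt_trans (x0_min y) fyx) fyx).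
Qed.

Lemma econvex_nonincreasing_le_argmin x y : (x <= x0)%R -> (y <= x)%R -> f x <= f y.
Proof.
move=> + yx; rewrite le_eqVlt => /predU1P[->|xx0]; first exact: x0_min.
move: yx; rewrite le_eqVlt => /predU1P[->|yx]; first exact: lexx.
rewrite leNgt; apply/negP => fyx.
exact: (econvex_no_strict_peak nf cf yx xx0 fyx (le_lt_trans (x0_min y) fyx)).
Qed.

End ConvexMonotone.

Section LowerSemicontinuous.
Variable R : realType.
Implicit Types f : R -> \bar R.

Lemma lower_semicontinuous_cst (c : \bar R) : lower_semicontinuous (fun _ : R => c).
Proof. by move=> x a ac; exists setT => //; exact: filterT. Qed.

Lemma lower_semicontinuous_comp f (g : R -> R) :
  lower_semicontinuous f -> continuous g -> lower_semicontinuous (f \o g).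
Proof. by move=> lf cg x a /lf[V nV HV]; exists (g @^-1` V) => [|y /HV]; first exact: cg. Qed.

Lemma lower_semicontinuousBr f k : k \is a fin_num ->
  lower_semicontinuous f -> lower_semicontinuous (fun x => f x - k).
Proof.
move=> /fineK <- lf x a; rewrite lteBrDr // => /lf[V nV HV].
by exists V => // y /HV; rewrite lteBrDr.
Qed.

Lemma lower_semicontinuous_gt_ball f s a : lower_semicontinuous f -> a%:E < f s ->
  exists2 e : R, (0 < e)%R & forall u, (`|s - u| < e)%R -> a%:E < f u.
Proof.
move=> lf /lf[V]; rewrite -nbhs_ballE => -[e e0 sV] HV.
by exists e => // u su; apply/HV/sV; rewrite -ball_normE.
Qed.

End LowerSemicontinuous.

Section ConvexArgmin.
Variable R : realType.
Implicit Types (f : R -> \bar R) (x y : R).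

Definition decreases_after f x := exists2 w, (x < w)%R & f w < f x.

Variable f : R -> \bar R.
Hypotheses (nf : forall x, f x != -oo) (cf : econvex f) (lf : lower_semicontinuous f).

Lemma decreases_after_le a b x : (a < b)%R -> f a < f b -> decreases_after f x -> (x <= b)%R.
Proof.
move=> ab fab [w xw fwx]; rewrite leNgt; apply/negP => bx.
have [fwb|fbw] := ltP (f w) (f b).
  exact: (econvex_no_strict_peak nf cf ab (lt_trans bx xw) fab fwb).
exact: (econvex_no_strict_peak nf cf bx xw (le_lt_trans fbw fwx) fwx).
Qed.

Lemma econvex_lsc_argmin a b c d : (a < b)%R -> f a < f b -> (c < d)%R -> f d < f c ->
  exists x0, forall y, f x0 <= f y.
Proof.
move=> ab fab cd fdc; pose S := decreases_after f.
have supS : has_sup S.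
  by split; [exists c; exists d | exists b => x /(decreases_after_le ab fab)].
exists (sup S) => y; rewrite leNgt; apply/negP => fy.
(* f > f y near sup S: a point of S just below sup S would be a strict peak,
   and a point just above sup S would belong to S. *)
have [r fyE] : exists r, f y = r%:E.
  by exists (fine (f y)); rewrite fineK // fin_numE nf (lt_eqF (lt_le_trans fy (leey _))).
rewrite fyE in fy; have [e e0 near_sup] := lower_semicontinuous_gt_ball lf fy.
have [ys|sy|ys] := ltgtP y (sup S); last by rewrite -ys fyE ltxx in fy.
- have eps0 : (0 < Num.min e (sup S - y))%R by rewrite lt_min e0 subr_gt0.
  have [u Su su] := sup_adherent eps0 supS.
  have us := sup_upper_bound supS Su; case: Su => w uw fwu.
  have := lexx (Num.min e (sup S - y))%R; rewrite {1}le_min => /andP[me my].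
  have yu : (y < u)%R by lra.
  have fu : r%:E < f u by apply: near_sup; rewrite ger0_norm ?subr_ge0 //; lra.
  by apply: (econvex_no_strict_peak nf cf yu uw _ fwu); rewrite fyE.
- pose u := (sup S + Num.min e (y - sup S) / 2)%R.
  have eps0 : (0 < Num.min e (y - sup S))%R by rewrite lt_min e0 subr_gt0.
  have := lexx (Num.min e (y - sup S))%R; rewrite {1}le_min => /andP[me my].
  have uy : (u < y)%R by rewrite /u; lra.
  have fu : r%:E < f u by apply: near_sup; rewrite ltr0_norm ?subr_lt0 /u; lra.
  have Su : S u by exists y; rewrite ?fyE.
  by have := sup_upper_bound supS Su; rewrite /u; lra.
Qed.

Lemma econvex_monotone_or_argmin :
  [\/ enonincreasing f, enondecreasing f | exists x0, forall y, f x0 <= f y].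
Proof.
have [|/existsNP[a /existsNP[b /not_implyP[ab /negP]]]] := pselect (enonincreasing f).
  by constructor 1.
rewrite -ltNge => fab.
have [|/existsNP[c /existsNP[d /not_implyP[cd /negP]]]] := pselect (enondecreasing f).
  by constructor 2.
rewrite -ltNge => fdc; constructor 3.
have strict x y : (x <= y)%R -> f x != f y -> (x < y)%R.
  by rewrite lt_neqAle => -> fxy; rewrite andbT; apply: contra_neq fxy => ->.
apply: (econvex_lsc_argmin (strict _ _ ab _) fab (strict _ _ cd _) fdc).
  by rewrite lt_eqF.
by rewrite eq_sym lt_eqF.
Qed.

End ConvexArgmin.

Section ConvexOperations.
Variable R : realType.
Implicit Types f : R -> \bar R.

Lemma eproper_cst0 : eproper (fun _ : R => 0).
Proof. by split=> //; exists 0%R; rewrite ltry. Qed.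

Lemma econvex_cst0 : econvex (fun _ : R => 0).
Proof. by move=> x y t _ _; rewrite !mule0 adde0. Qed.

Lemma econvexBr f k : k \is a fin_num -> econvex f -> econvex (fun x => f x - k).
Proof.
move=> /fineK <- cf x y t t0 t1; set r := fine k.
have t_gt0 : (0 < t%:E) by rewrite lte_fin.
have t1_gt0 : (0 < (1 - t)%:E) by rewrite lte_fin subr_gt0.
apply: le_trans (leeB (cf x y t t0 t1) (lexx r%:E)) _.
case: (f x) => [a||]; case: (f y) => [b||] /=.
all: rewrite ?(gt0_muley, gt0_muleNy, addNye, addeNy) // -?EFinM -?EFinD /= ?leey //.
by rewrite lee_fin; lra.
Qed.

Lemma econvex_comp_max f x0 : econvex f ->
  (forall x y, (x0 <= x)%R -> (x <= y)%R -> f x <= f y) ->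
  econvex (fun x => f (Num.max x x0)).
Proof.
move=> cf mono x y t t0 t1; apply: le_trans (cf _ _ t t0 t1); apply: mono.
  by rewrite le_max lexx orbT.
have le_max2 u : (u <= Num.max u x0)%R /\ (x0 <= Num.max u x0)%R.
  by rewrite !le_max !lexx orbT.
have [? ?] := le_max2 x; have [? ?] := le_max2 y.
by rewrite ge_max; apply/andP; split; nra.
Qed.

Lemma econvex_comp_min f x0 : econvex f ->
  (forall x y, (x <= x0)%R -> (y <= x)%R -> f x <= f y) ->
  econvex (fun x => f (Num.min x x0)).
Proof.
move=> cf mono x y t t0 t1; apply: le_trans (cf _ _ t t0 t1); apply: mono.
  by rewrite ge_min lexx orbT.
have ge_min2 u : (Num.min u x0 <= u)%R /\ (Num.min u x0 <= x0)%R.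
  by rewrite !ge_min !lexx orbT.
have [? ?] := ge_min2 x; have [? ?] := ge_min2 y.
by rewrite le_min; apply/andP; split; nra.
Qed.

End ConvexOperations.

Section Subdifferential.
Variable R : realType.
Implicit Types (f g h : R -> \bar R) (A : set R) (x y z v : R).

Lemma subdiff_cst0 z : subdiff (fun _ => 0) z = [set 0%R].
Proof.
apply/seteqP; split => v; last by move=> ->; split=> // y; rewrite mul0r adde0.
move=> [_ v_sub]; have := v_sub (z + 1)%R; have := v_sub (z - 1)%R.
by rewrite !add0e !lee_fin => ? ?; apply/eqP; rewrite eq_le; apply/andP; split; lra.
Qed.

Lemma setsum_R0l A : setsum_R [set 0%R] A = A.
Proof.
apply/seteqP; split => [v [_ [b [-> [Ab ->]]]]|v Av]; first by rewrite add0r.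
by exists 0%R, v; rewrite add0r.
Qed.

Lemma setsum_R0r A : setsum_R A [set 0%R] = A.
Proof.
apply/seteqP; split => [v [a [_ [Aa [-> ->]]]]|v Av]; first by rewrite addr0.
by exists v, 0%R; rewrite addr0.
Qed.

Lemma subdiff_add g h z :
  setsum_R (subdiff g z) (subdiff h z) `<=` subdiff (fun x => g x + h x) z.
Proof.
move=> _ [a [b [[gz ga] [[hz hb] ->]]]]; split => [|y]; first by rewrite fin_numD gz hz.
apply: le_trans (leeD (ga y) (hb y)).
by rewrite -(fineK gz) -(fineK hz) -!EFinD lee_fin; lra.
Qed.

Lemma subdiff0_argmin g z : g z \is a fin_num -> (forall y, g z <= g y) -> subdiff g z 0%R.
Proof. by move=> gz gz_min; split=> // y; rewrite mul0r adde0. Qed.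

Lemma subdiff_argmin_sign f x0 z v : (forall y, f x0 <= f y) -> subdiff f z v ->
  (x0 <= z /\ 0 <= v)%R \/ (z <= x0 /\ v <= 0)%R.
Proof.
move=> x0_min [fz v_sub].
have : (v * (x0 - z) <= 0)%R.
  by rewrite -lee_fin -(leeD2lE _ _ fz) adde0; apply: le_trans (v_sub x0) (x0_min z).
have [x0z|zx0] := leP x0 z => v_sign; last by right; split; [exact: ltW | nra].
have [v0|v0] := leP 0%R v; [by left | right; split; [nra | exact: ltW]].
Qed.

End Subdifferential.

Section ArgminDecomposition.
Variable R : realType.
Implicit Types (x y z v : R).

Definition nondecr_part (f : R -> \bar R) x0 x := f (Num.max x x0) - f x0.
Definition nonincr_part (f : R -> \bar R) x0 x := f (Num.min x x0).

Variables (f : R -> \bar R) (x0 : R).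
Hypotheses (nf : forall x, f x != -oo) (cf : econvex f) (lf : lower_semicontinuous f).
Hypotheses (x0_min : forall y, f x0 <= f y) (fx0 : f x0 \is a fin_num).

Lemma nondecr_part_ge0 x : 0 <= nondecr_part f x0 x.
Proof. by rewrite sube_ge0 ?fx0 ?orbT. Qed.

Lemma nondecr_part_le x : (x <= x0)%R -> nondecr_part f x0 x = 0.
Proof. by move=> xx0; rewrite /nondecr_part max_r // subee. Qed.

Lemma nonincr_part_ge y : (x0 <= y)%R -> nonincr_part f x0 y = f x0.
Proof. by move=> x0y; rewrite /nonincr_part min_r. Qed.

Lemma nondecr_part_proper : eproper (nondecr_part f x0).
Proof.
split=> [x|]; first by apply: contraTneq (nondecr_part_ge0 x) => ->.
by exists x0; rewrite nondecr_part_le ?ltry.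
Qed.

Lemma nonincr_part_proper : eproper (nonincr_part f x0).
Proof.
split=> [x|]; first exact: nf.
by exists x0; rewrite nonincr_part_ge // ltey_eq fx0.
Qed.

Lemma nondecr_part_lsc : lower_semicontinuous (nondecr_part f x0).
Proof.
apply: lower_semicontinuousBr fx0 (lower_semicontinuous_comp lf _) => x.
exact: continuous_max (@cvg_id _ _) (cvg_cst x0).
Qed.

Lemma nonincr_part_lsc : lower_semicontinuous (nonincr_part f x0).
Proof.
apply: lower_semicontinuous_comp lf _ => x.
exact: continuous_min (@cvg_id _ _) (cvg_cst x0).
Qed.

Lemma nondecr_part_convex : econvex (nondecr_part f x0).
Proof.
exact/econvexBr/econvex_comp_max/(econvex_nondecreasing_ge_argmin nf cf x0_min).
Qed.

Lemma nonincr_part_convex : econvex (nonincr_part f x0).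
Proof. exact/econvex_comp_min/(econvex_nonincreasing_le_argmin nf cf x0_min). Qed.

Lemma nondecr_part_nondecreasing : enondecreasing (nondecr_part f x0).
Proof.
move=> x y xy; apply: leeB => //; apply: (econvex_nondecreasing_ge_argmin nf cf x0_min).
  by rewrite le_max lexx orbT.
by rewrite ge_max !le_max xy lexx !orbT.
Qed.

Lemma nonincr_part_nonincreasing : enonincreasing (nonincr_part f x0).
Proof.
move=> x y xy; apply: (econvex_nonincreasing_le_argmin nf cf x0_min).
  by rewrite ge_min lexx orbT.
by rewrite le_min !ge_min xy lexx !orbT.
Qed.

Lemma nondecr_part_add_nonincr_part x : f x = nondecr_part f x0 x + nonincr_part f x0 x.
Proof.
have [xx0|x0x] := leP x x0; first by rewrite nondecr_part_le // add0e /nonincr_part min_l.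
by rewrite nonincr_part_ge ?(ltW x0x) // /nondecr_part max_l ?(ltW x0x) // subeK.
Qed.


Lemma subdiff_nondecr_part z v : subdiff f z v -> (x0 <= z)%R -> (0 <= v)%R ->
  subdiff (nondecr_part f x0) z v.
Proof.
move=> [fz v_sub] x0z v0; rewrite /subdiff {1 2}/nondecr_part max_l //.
split=> [|y]; first by rewrite fin_numB fz fx0.
have [x0y|yx0] := leP x0 y; first by rewrite /nondecr_part max_l // addeAC leeB.
rewrite (nondecr_part_le (ltW yx0)); move: (v_sub x0).
by rewrite -(fineK fz) -(fineK fx0) -EFinN -!EFinD !lee_fin; nra.
Qed.

Lemma subdiff_nonincr_part z v : subdiff f z v -> (z <= x0)%R -> (v <= 0)%R ->
  subdiff (nonincr_part f x0) z v.
Proof.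
move=> [fz v_sub] zx0 v0; rewrite /subdiff {1 2}/nonincr_part min_l //.
split=> // y; have [yx0|x0y] := leP y x0; first by rewrite /nonincr_part min_l.
rewrite (nonincr_part_ge (ltW x0y)); move: (v_sub x0).
by rewrite -(fineK fz) -(fineK fx0) -!EFinD !lee_fin; nra.
Qed.

Lemma subdiff_nondecr_part0 z : (z <= x0)%R -> subdiff (nondecr_part f x0) z 0%R.
Proof.
move=> zx0; apply: subdiff0_argmin => [|y]; first by rewrite nondecr_part_le.
by rewrite nondecr_part_le // nondecr_part_ge0.
Qed.

Lemma subdiff_nonincr_part0 z : (x0 <= z)%R -> subdiff (nonincr_part f x0) z 0%R.
Proof.
by move=> x0z; apply: subdiff0_argmin => [|y]; rewrite nonincr_part_ge // x0_min.
Qed.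

Lemma subdiff_nondecr_part_add_nonincr_part z :
  subdiff f z = setsum_R (subdiff (nondecr_part f x0) z) (subdiff (nonincr_part f x0) z).
Proof.
apply/seteqP; split=> [v fzv|v /subdiff_add]; last first.
  rewrite (_ : (fun x => _) = f) //.
  by apply/funext => x; rewrite -nondecr_part_add_nonincr_part.
have [[x0z v0]|[zx0 v0]] := subdiff_argmin_sign x0_min fzv.
  exists v, 0%R; rewrite addr0; split; first exact: subdiff_nondecr_part.
  by split; first exact: subdiff_nonincr_part0.
exists 0%R, v; rewrite add0r; split; first exact: subdiff_nondecr_part0.
by split; first exact: subdiff_nonincr_part.
Qed.

End ArgminDecomposition.

Unset Implicit Arguments. Set Strict Implicit.

Theorem lemma3p1 (R : realType) (phi : R -> \bar R) :
  eproper phi -> lower_semicontinuous phi -> econvex phi ->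
  exists phiu phid : R -> \bar R,
    [/\ eproper phiu, lower_semicontinuous phiu, econvex phiu & enondecreasing phiu] /\
    [/\ eproper phid, lower_semicontinuous phid, econvex phid & enonincreasing phid] /\
    (forall x, phi x = phiu x + phid x) /\
    ((interior (edom phi) !=set0) ->
       forall z, edom phi z -> subdiff phi z = setsum_R (subdiff phiu z) (subdiff phid z)).
Proof.
move=> phi_proper phi_lsc phi_cvx; have [phi_nNy [x1 phi_x1]] := phi_proper.
pose cst0 : R -> \bar R := fun=> 0.
have [cst0_proper cst0_lsc cst0_cvx] :
    [/\ eproper cst0, lower_semicontinuous cst0 & econvex cst0].
  by split; [exact: eproper_cst0 | exact: lower_semicontinuous_cst | exact: econvex_cst0].
have [ni|nd|[x0 x0_min]] := econvex_monotone_or_argmin phi_nNy phi_cvx phi_lsc.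
- exists cst0, phi; split; first by split=> // x y _.
  split=> //; split=> [x|_ z _]; first by rewrite add0e.
  by rewrite subdiff_cst0 setsum_R0l.
- exists phi, cst0; split=> //; split; first by split=> // x y _.
  split=> [x|_ z _]; first by rewrite adde0.
  by rewrite subdiff_cst0 setsum_R0r.
have fx0 : phi x0 \is a fin_num.
  by rewrite fin_numE phi_nNy (lt_eqF (le_lt_trans (x0_min x1) phi_x1)).
exists (nondecr_part phi x0), (nonincr_part phi x0); split.
  split; [exact: nondecr_part_proper | exact: nondecr_part_lsc |
          exact: nondecr_part_convex | exact: nondecr_part_nondecreasing].
split.
  split; [exact: nonincr_part_proper | exact: nonincr_part_lsc |
          exact: nonincr_part_convex | exact: nonincr_part_nonincreasing].
split=> [x|_ z _]; first exact: nondecr_part_add_nonincr_part.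
exact: subdiff_nondecr_part_add_nonincr_part.
Qed.
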